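(* Let $A$ be a nontrivial finite abelian group, let $\Gamma$ be an alphabet and let $G\le\llbracket\Gamma^{\mathbb{Z}}\rrbracket$ be a subgroup whose action is move-$A$ithful. Then for every alphabet $\Sigma$, the restricted wreath product $A\wr G=\left(\bigoplus_{G}A\right)\rtimes G$ embeds as a subgroup of $\llbracket\Sigma^{\mathbb{Z}}\rrbracket$.
   Context: An alphabet is a finite set with at least two elements. $\llbracket\Sigma^{\mathbb{Z}}\rrbracket$ is the group of homeomorphisms $f$ of $\Sigma^{\mathbb{Z}}$ with a continuous cocycle $c_f:\Sigma^{\mathbb{Z}}\to\mathbb{Z}$ such that $f(x)=\sigma^{c_f(x)}(x)$, where $\sigma(x)_i=x_{i+1}$; for $g\in G$ write $c_g$ for its cocycle. For a finite abelian group $A$, the action of $G$ is move-$A$ithful if for every map $\beta:G\to A$ with finite nonempty support there exist $x\in\Gamma^{\mathbb{Z}}$ and $\gamma:\mathbb{Z}\to\mathrm{End}(A)$ with $\sum_{g\in G}\gamma(c_g(x))(\beta(g))\neq0_A$. In $A\wr G$, $G$ acts on $\bigoplus_G A$ by left translation of coordinates. *)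

From HB Require Import structures.
From mathcomp Require Import all_boot all_order all_algebra.
From mathcomp Require Import boolp classical_sets cardinality fsbigop.
From Stdlib Require Import ClassicalEpsilon.
Set Implicit Arguments. Unset Strict Implicit. Unset Printing Implicit Defensive.
Import Order.TTheory GRing.Theory Num.Theory.
Local Open Scope classical_set_scope.
Local Open Scope ring_scope.

Definition conf (S : Type) := int -> S.

(* Self-maps of S^Z; equipped (classically) with a choice structure so that
   finitely supported sums over sets of them can be formed. *)
Definition endo (S : Type) := conf S -> conf S.
HB.instance Definition _ (S : Type) := gen_eqMixin (endo S).
HB.instance Definition _ (S : Type) := gen_choiceMixin (endo S).

Definition shift (S : Type) (n : int) (x : conf S) : conf S := fun i => x (i + n).

Definition alphabet (S : finType) : Prop := (1 < #|S|)%N.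

(* x and y agree on the window [-N, N] (basic cylinder neighbourhoods of
   the product topology of discrete spaces). *)
Definition agree (S : Type) (N : nat) (x y : conf S) : Prop :=
  forall i : int, (`|i| <= N)%N -> x i = y i.

(* Continuity of a map S^Z -> T^Z for the product topologies. *)
Definition conf_continuous (S T : Type) (f : conf S -> conf T) : Prop :=
  forall (x : conf S) (M : nat), exists N : nat,
    forall y, agree N x y -> agree M (f x) (f y).

Definition int_continuous (S : Type) (c : conf S -> int) : Prop :=
  forall x : conf S, exists N : nat, forall y, agree N x y -> c y = c x.

Definition homeomorphism (S : Type) (f : conf S -> conf S) : Prop :=
  conf_continuous f /\
  exists g : conf S -> conf S, cancel f g /\ cancel g f /\ conf_continuous g.

Definition is_cocycle (S : Type) (f : conf S -> conf S) (c : conf S -> int) :=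
  forall x, f x = shift (c x) x.

Definition TFG (S : Type) : set (endo S) :=
  fun f => homeomorphism f /\ exists c, int_continuous c /\ is_cocycle f c.

Definition subgroup_TFG (S : Type) (G : set (endo S)) : Prop :=
  G `<=` @TFG S /\ G id /\
  (forall f g, G f -> G g -> G (f \o g)) /\
  (forall f, G f -> exists g, G g /\ cancel f g /\ cancel g f).

Definition cocycles_of (S : Type) (G : set (endo S))
  (c : endo S -> conf S -> int) : Prop :=
  forall g, G g -> int_continuous (c g) /\ is_cocycle g (c g).

(* Support of a map beta : G -> A (maps are total, with support in G). *)
Definition supp (T : Type) (A : zmodType) (b : T -> A) : set T :=
  [set g | b g != 0].

Definition move_faithful (A : finZmodType) (S : Type)
  (G : set (endo S)) (c : endo S -> conf S -> int) : Prop :=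
  forall beta : endo S -> A,
    supp beta `<=` G -> finite_set (supp beta) -> supp beta != set0 ->
    exists (x : conf S) (gamma : int -> {additive A -> A}),
      \sum_(g \in G) (gamma (c g x)) (beta g) != 0.

Definition finv (S : Type) (g : conf S -> conf S) : conf S -> conf S :=
  epsilon (inhabits id) (fun k => cancel g k /\ cancel k g).

Definition wreath_carrier (A : zmodType) (S : Type) :=
  ((endo S -> A) * endo S)%type.

Definition in_wreath (A : zmodType) (S : Type) (G : set (endo S))
  (w : wreath_carrier A S) : Prop :=
  G w.2 /\ supp w.1 `<=` G /\ finite_set (supp w.1).

(* (f1, g1)(f2, g2) = (f1 + g1.f2, g1 g2), with (g.f)(h) = f(g^-1 h). *)
Definition wmul (A : zmodType) (S : Type) (w1 w2 : wreath_carrier A S)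
  : wreath_carrier A S :=
  (fun h : endo S => w1.1 h + w2.1 (finv w1.2 \o h : endo S), w1.2 \o w2.2).

From Pilot Require Import Defs.
From HB Require Import structures.
From mathcomp Require Import all_boot all_order all_algebra.
From mathcomp Require Import boolp classical_sets functions cardinality fsbigop.
From mathcomp Require Import finmap.
From mathcomp Require Import zify ring.
From Stdlib Require Import ClassicalEpsilon.
Set Implicit Arguments. Unset Strict Implicit. Unset Printing Implicit Defensive.
Import Order.TTheory GRing.Theory Num.Theory.
Local Open Scope classical_set_scope.
Local Open Scope ring_scope.

(* finv is the inverse of Defs; fingraph's finv would otherwise shadow it. *)
Local Notation finv := Defs.finv.

(* Every element of [[Sigma^Z]] we build has the form x |-> sigma^(d x) x, so
   it suffices to produce, for each w in A wr G, a continuous displacement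
   d_w : Lambda^Z -> Z over some finite alphabet Lambda that satisfies the
   cocycle identity d_(w1 w2)(x) = d_w2(x) + d_w1(sigma^(d_w2 x) x) and
   separates elements; the last section recodes Lambda^Z into Sigma^Z by
   blocks of length |Lambda|+1 (cocycle_embedding).  A configuration x in Lambda^Z is read
   as chains of consecutive "blocks" of length 2|A| labelled 0..2|A|-1; every
   block carries two "sites" (its left and right half), each owning |A| cells
   indexed by A.  Walking along a chain and turning back at its ends gives a
   free Z-action on sites (walk); reading the Gamma-letters along it gives a
   point of Gamma^Z, so G acts on sites through its cocycles (site_act; it is
   an action by the cocycle identity, proved first from aperiodic points).
   The bool-letters are lamps; lamp_sum f t adds up f(h) over the h in G
   whose lamp at h^-1.t is lit, and w = (f, g) moves the cell (s, a) to the
   cell (g.s, a + lamp_sum f (g.s)).  d_w is the displacement of the cell at 0.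
   Continuity is locality of all these readings; injectivity is tested on
   configurations made of one bi-infinite chain with a single lit lamp, where
   move-A-ithfulness recovers the lamp configuration f. *)

(* Shifts and aperiodic points *)

Lemma shift_shift (S : Type) (a b : int) (x : conf S) :
  shift a (shift b x) = shift (b + a) x.
Proof. by apply: funext => i; rewrite /shift; congr (x _); ring. Qed.

Lemma shift0 (S : Type) (x : conf S) : shift 0 x = x.
Proof. by apply: funext => i; rewrite /shift addr0. Qed.

Lemma agree_le (S : Type) (N M : nat) (x y : conf S) :
  (M <= N)%N -> agree N x y -> agree M x y.
Proof. by move=> le h i hi; apply: h; apply: leq_trans le. Qed.

Definition aperiodic (S : Type) (x : conf S) := forall k, shift k x = x -> k = 0.

Lemma aperiodic_shift_inj (S : Type) (x : conf S) a b :
  aperiodic x -> shift a x = shift b x -> a = b.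
Proof.
move=> ap e; have : shift (- b) (shift a x) = shift (- b) (shift b x) by rewrite e.
by rewrite !shift_shift subrr shift0 => /ap /eqP; rewrite subr_eq0 => /eqP.
Qed.

Definition pad (S : Type) (a b : S) (N : nat) (x : conf S) : conf S :=
  fun i => if (`|i| <= N)%N then x i else if i == (N.+1)%:Z then a else b.

Lemma agree_pad (S : Type) (a b : S) N x : agree N x (pad a b N x).
Proof. by move=> i hi; rewrite /pad hi. Qed.

Lemma pad_aperiodic (S : eqType) (a b : S) N x : a != b -> aperiodic (pad a b N x).
Proof.
move=> ab k e; have far (i : int) : (N.+1 < `|i|)%N -> pad a b N x i = b.
  by move=> hi; rewrite /pad !ifF //; apply/negbTE; lia.
have at_mark : pad a b N x (N.+1)%:Z = a by rewrite /pad ifF ?eqxx //; apply/negbTE; lia.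
case: (ltrgtP k 0) => // hk.
- have off : pad a b N x ((N.+1)%:Z - k) = b by apply: far; lia.
  have := congr1 (fun y => y ((N.+1)%:Z - k)) e.
  by rewrite /shift subrK at_mark off => ab'; rewrite ab' eqxx in ab.
- have off : pad a b N x ((N.+1)%:Z + k) = b by apply: far; lia.
  have := congr1 (fun y => y ((N.+1)%:Z)) e.
  by rewrite /shift at_mark off => ba; rewrite ba eqxx in ab.
Qed.

Lemma alphabet_two_letters (S : finType) : alphabet S -> exists a b : S, a != b.
Proof.
rewrite /alphabet => h; apply: NNPP => hn.
have : (#|S| <= 1)%N; last by rewrite leqNgt h.
apply/card_le1_eqP => a b _ _; case: (eqVneq a b) => // nab.
by exfalso; apply: hn; exists a, b.
Qed.

Lemma finv_eq (S : Type) (g k : conf S -> conf S) :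
  cancel g k -> cancel k g -> finv g = k.
Proof.
move=> gk kg; rewrite /finv.
have [k0g _] := @epsilon_spec _ (inhabits id) (fun k => cancel g k /\ cancel k g)
  (ex_intro _ k (conj gk kg)).
by apply: funext => x; rewrite -{1}(kg x) k0g.
Qed.

(* Subgroups of [[Gamma^Z]] and their cocycles *)

Section Subgroup.
Variables (Gam : finType) (G : set (endo Gam)) (hG : subgroup_TFG G).

Lemma G_id : G id. Proof. by case: hG => _ []. Qed.

Lemma G_comp g h : G g -> G h -> G (g \o h).
Proof. by case: hG => _ [_ []] + _; apply. Qed.

Lemma G_inverse g : G g -> [/\ G (finv g), cancel g (finv g) & cancel (finv g) g].
Proof.
case: hG => _ [_ [_ hinv]] /hinv [g' [Gg' [gK Kg]]].
by rewrite (finv_eq gK Kg).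
Qed.

Lemma G_finv g : G g -> G (finv g). Proof. by case/G_inverse. Qed.
Lemma finvK g : G g -> cancel g (finv g). Proof. by case/G_inverse. Qed.
Lemma finvKV g : G g -> cancel (finv g) g. Proof. by case/G_inverse. Qed.

Lemma finv_finv g : G g -> finv (finv g) = g.
Proof. by move=> Gg; apply: finv_eq; [apply: finvKV | apply: finvK]. Qed.

Lemma finv_comp g h : G g -> G h -> finv (g \o h) = finv h \o finv g.
Proof. by move=> Gg Gh; apply: finv_eq => x /=; rewrite ?finvK ?finvKV. Qed.

Lemma G_left_bij g : G g -> set_bij G G (fun h : endo Gam => g \o h).
Proof.
move=> Gg; split.
- by move=> h Gh; apply: G_comp.
- move=> h1 h2 _ _ e; apply: funext => u.
  by have := congr1 (fun k => finv g (k u)) e; rewrite /= !finvK.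
- move=> h Gh; exists (finv g \o h); first by apply: G_comp => //; apply: G_finv.
  by apply: funext => u /=; rewrite finvKV.
Qed.

Lemma G_finv_bij : set_bij G G (fun h : endo Gam => finv h).
Proof.
split.
- by move=> h Gh; apply: G_finv.
- by move=> h1 h2 /set_mem G1 /set_mem G2 e; rewrite -(finv_finv G1) e finv_finv.
- by move=> t Gt; exists (finv t); [apply: G_finv | rewrite finv_finv].
Qed.

Variables (c : endo Gam -> conf Gam -> int) (hc : cocycles_of G c)
  (hGam : alphabet Gam).

(* The cocycle identity c_(gh)(u) = c_g(h u) + c_h(u).  It is clear at
   aperiodic points, and every point is a limit of aperiodic ones. *)
Lemma cocycle_comp g h u : G g -> G h -> c (g \o h) u = c g (h u) + c h u.
Proof.
move=> Gg Gh; have Ggh := G_comp Gg Gh.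
have [c1 e1] := hc Ggh; have [c2 e2] := hc Gg; have [c3 e3] := hc Gh.
have [N1 h1] := c1 u; have [N2 h2] := c2 (h u); have [N3 h3] := c3 u.
have [hcont _] : homeomorphism h by case: hG => + _ => /(_ h Gh) [].
have [N4 h4] := hcont u N2.
have [a [b ab]] := alphabet_two_letters hGam.
pose N := maxn N1 (maxn N3 N4); pose u' := pad a b N u.
have ap : aperiodic u' by apply: pad_aperiodic.
have ag : agree N u u' by apply: agree_pad.
have q1 : c (g \o h) u' = c (g \o h) u by apply/h1/(agree_le _ ag); lia.
have q3 : c h u' = c h u by apply/h3/(agree_le _ ag); lia.
have q2 : c g (h u') = c g (h u) by apply/h2/h4/(agree_le _ ag); lia.
rewrite -q1 -q2 -q3; apply: (aperiodic_shift_inj ap).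
by rewrite -e1 /= [c g _ + _]addrC -shift_shift -e3 -e2.
Qed.

Lemma cocycle_id u : c id u = 0.
Proof.
by have /eqP := cocycle_comp u G_id G_id; rewrite -subr_eq subrr eq_sym => /eqP.
Qed.

End Subgroup.

(* Walking along chains of blocks.
   Over an alphabet L with a labelling lab : L -> nat, a block of x starts at p
   when the letters at p, ..., p + n - 1 are labelled 0, ..., n - 1.  A site is
   a block start with a side (true = right half).  The walk moves n cells at a
   time, leftwards on right sides and rightwards on left sides, and switches
   side where the chain of consecutive blocks ends; it is a bijection on the
   sites of x, so it defines a Z-action (walk x k). *)

Definition site := (int * bool)%type.

Definition site_shift (k : int) (s : site) : site := (s.1 + k, s.2).

Section Walk.
Variables (n : nat) (L : Type) (lab : L -> nat).
Implicit Types x y : conf L.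

Definition is_block x (p : int) : bool :=
  [forall j : 'I_n, lab (x (p + (nat_of_ord j)%:Z)) == j].

Definition step x (s : site) : site :=
  let (p, right) := s in
  if right then (if is_block x (p - n%:Z) then (p - n%:Z, true) else (p, false))
  else (if is_block x (p + n%:Z) then (p + n%:Z, false) else (p, true)).

Definition step_back x (s : site) : site :=
  let (p, right) := s in
  if right then (if is_block x (p + n%:Z) then (p + n%:Z, true) else (p, false))
  else (if is_block x (p - n%:Z) then (p - n%:Z, false) else (p, true)).

Definition walk x (k : int) (s : site) : site :=
  if 0 <= k then iter `|k| (step x) s else iter `|k| (step_back x) s.

Lemma step_block x s : is_block x s.1 -> is_block x (step x s).1.
Proof. by case: s => p [] /= v; case: ifP. Qed.

Lemma step_back_block x s : is_block x s.1 -> is_block x (step_back x s).1.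
Proof. by case: s => p [] /= v; case: ifP. Qed.

Lemma step_backK x s : is_block x s.1 -> step_back x (step x s) = s.
Proof.
by case: s => p [] /= v; case: ifP => h /=; rewrite ?h ?subrK ?addrK ?v.
Qed.

Lemma stepK x s : is_block x s.1 -> step x (step_back x s) = s.
Proof.
by case: s => p [] /= v; case: ifP => h /=; rewrite ?h ?subrK ?addrK ?v.
Qed.

Lemma iter_block x (f : site -> site) m s :
  (forall s, is_block x s.1 -> is_block x (f s).1) ->
  is_block x s.1 -> is_block x (iter m f s).1.
Proof. by move=> hf v; elim: m => //= m ih; apply: hf. Qed.

Lemma walk_block x k s : is_block x s.1 -> is_block x (walk x k s).1.
Proof.
by rewrite /walk; case: ifP => _ v; apply: iter_block => // *;
  [apply: step_block | apply: step_back_block].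
Qed.

Lemma walkS x k s : is_block x s.1 -> walk x (k + 1) s = step x (walk x k s).
Proof.
move=> v; rewrite /walk; case: (lerP 0 k) => hk.
  by rewrite ifT; [have -> : absz (k + 1) = (absz k).+1 by lia | lia].
case: (eqVneq k (-1)) => [->|hk1]; first by rewrite /= stepK.
rewrite ifF; last by apply/negbTE; lia.
have -> : absz k = (absz (k + 1)).+1 by lia.
by rewrite iterS stepK //; apply: iter_block => // *; apply: step_back_block.
Qed.

Lemma walkB x k s : is_block x s.1 -> walk x (k - 1) s = step_back x (walk x k s).
Proof.
move=> v; rewrite -{2}(subrK 1 k) walkS ?step_backK //; exact: walk_block.
Qed.

Lemma walkD x a b s : is_block x s.1 -> walk x (a + b) s = walk x a (walk x b s).
Proof.
move=> v; have vb := walk_block b v.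
elim/int_rec: a => [|m ih|m ih]; first by rewrite add0r.
- by rewrite -addn1 PoszD addrAC !walkS // ih.
- by rewrite -addn1 PoszD opprD addrAC !walkB // ih.
Qed.

Lemma is_block_shift x k p : is_block (shift k x) p = is_block x (p + k).
Proof. by apply: eq_forallb => j; rewrite /shift addrAC. Qed.

Lemma step_shift x k s : site_shift k (step (shift k x) s) = step x (site_shift k s).
Proof.
case: s => p [] /=; rewrite !is_block_shift.
- rewrite (_ : p - n%:Z + k = p + k - n%:Z); last by ring.
  by case: ifP => h; rewrite /site_shift /=; congr pair; ring.
- rewrite (_ : p + n%:Z + k = p + k + n%:Z); last by ring.
  by case: ifP => h; rewrite /site_shift /=; congr pair; ring.
Qed.

Lemma step_back_shift x k s :
  site_shift k (step_back (shift k x) s) = step_back x (site_shift k s).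
Proof.
case: s => p [] /=; rewrite !is_block_shift.
- rewrite (_ : p + n%:Z + k = p + k + n%:Z); last by ring.
  by case: ifP => h; rewrite /site_shift /=; congr pair; ring.
- rewrite (_ : p - n%:Z + k = p + k - n%:Z); last by ring.
  by case: ifP => h; rewrite /site_shift /=; congr pair; ring.
Qed.

Lemma iter_conj (T U : Type) (f : T -> T) (g : U -> U) (h : T -> U) m s :
  (forall s, h (f s) = g (h s)) -> h (iter m f s) = iter m g (h s).
Proof. by move=> e; elim: m => //= m ih; rewrite e ih. Qed.

Lemma walk_shift x k m s : site_shift k (walk (shift k x) m s) = walk x m (site_shift k s).
Proof.
by rewrite /walk; case: ifP => _; apply: iter_conj => ?;
  [apply: step_shift | apply: step_back_shift].
Qed.

(* Locality: one step moves by at most n cells and only reads x within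
   distance 2n of the current site, so k steps read x within n|k| + 2n. *)
Lemma is_block_local x y R p :
  agree R x y -> (`|p| + n <= R)%N -> is_block x p = is_block y p.
Proof. by move=> ag hp; apply: eq_forallb => j; rewrite ag //; have := ltn_ord j; lia. Qed.

Lemma step_local x y R s :
  agree R x y -> (`|s.1| + 2 * n <= R)%N -> step x s = step y s.
Proof. by case: s => p [] /= ag hp; rewrite (is_block_local ag) //; lia. Qed.

Lemma step_back_local x y R s :
  agree R x y -> (`|s.1| + 2 * n <= R)%N -> step_back x s = step_back y s.
Proof. by case: s => p [] /= ag hp; rewrite (is_block_local ag) //; lia. Qed.

Lemma step_dist x s : (`|(step x s).1 - s.1| <= n)%N.
Proof. by case: s => p [] /=; case: ifP => _ /=; lia. Qed.

Lemma step_back_dist x s : (`|(step_back x s).1 - s.1| <= n)%N.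
Proof. by case: s => p [] /=; case: ifP => _ /=; lia. Qed.

Lemma iter_dist (f : site -> site) m s :
  (forall s, (`|(f s).1 - s.1| <= n)%N) -> (`|(iter m f s).1 - s.1| <= n * m)%N.
Proof. by move=> bf; elim: m => [|m ih] /=; [lia | have := bf (iter m f s); lia]. Qed.

Lemma walk_dist x k s : (`|(walk x k s).1 - s.1| <= n * `|k|)%N.
Proof.
by rewrite /walk; case: ifP => _; apply: iter_dist => ?;
  [apply: step_dist | apply: step_back_dist].
Qed.

Lemma iter_local (f g : site -> site) R m s :
  (forall s, (`|s.1| + 2 * n <= R)%N -> f s = g s) ->
  (forall s, (`|(f s).1 - s.1| <= n)%N) ->
  (`|s.1| + n * m + 2 * n <= R)%N -> iter m f s = iter m g s.
Proof.
move=> efg bf; elim: m => [|m ih] hR //=.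
rewrite -ih; last lia.
by apply: efg; have := iter_dist m s bf; lia.
Qed.

Lemma walk_local x y R k s : agree R x y ->
  (`|s.1| + n * `|k| + 2 * n <= R)%N -> walk x k s = walk y k s.
Proof.
move=> ag hR; rewrite /walk; case: ifP => _; apply: iter_local hR.
- by move=> s' hs'; apply: step_local ag hs'.
- exact: step_dist.
- by move=> s' hs'; apply: step_back_local ag hs'.
- exact: step_back_dist.
Qed.

End Walk.

(* Finitely supported sums over a possibly infinite index set *)

Lemma fsum_restrict (T : choiceType) (V : zmodType) (D S : set T) (phi : T -> V) :
  (forall h, D h -> ~ S h -> phi h = 0) -> \sum_(h \in D) phi h = \sum_(h \in D `&` S) phi h.
Proof.
move=> z; rewrite (fsbig_widen (D `&` S) D) //.
by move=> h [Dh nh] /=; apply: z => // Sh; apply: nh.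
Qed.

Lemma fsumD (T : choiceType) (V : zmodType) (D S : set T) (f1 f2 : T -> V) :
  finite_set S -> (forall h, ~ S h -> f1 h = 0 /\ f2 h = 0) ->
  \sum_(h \in D) (f1 h + f2 h) = \sum_(h \in D) f1 h + \sum_(h \in D) f2 h.
Proof.
move=> finS out; rewrite !(@fsum_restrict _ _ D S) => [|h _ /out[]|h _ /out[]|h _ /out[]] //.
- by rewrite fsbig_split //; apply: finite_setIr.
- by move=> -> ->; rewrite addr0.
Qed.

(* The intermediate shift Lambda^Z and the displacement of a wreath element *)

Section Model.
Variables (A : finZmodType) (Gam : finType).

(* Blocks have length 2|A|: the left and right site of a block own |A| cells
   each, and the cell of value a in the site s is cell s a. *)
Definition ncells : nat := #|A|.
Definition blen : nat := (2 * ncells)%N.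
Definition Lambda := ('I_blen * (Gam * bool))%type.
Definition lab_of (a : Lambda) : nat := a.1.
Implicit Types x y : conf Lambda.

Local Notation is_block := (is_block blen lab_of).
Local Notation walk := (walk blen lab_of).

Definition lab x i : nat := lab_of (x i).

Definition site_base (s : site) : int := s.1 + (if s.2 then ncells%:Z else 0).

Definition cell (s : site) (a : A) : int := site_base s + (index a (enum A))%:Z.

Definition reading x (s : site) : conf Gam :=
  fun i => (x (site_base (walk x i s))).2.1.
Definition lamp_on x (s : site) : bool := (x (site_base s)).2.2.

Definition in_cell x i : bool := is_block x (i - (lab x i)%:Z).
Definition cell_site x i : site := (i - (lab x i)%:Z, (ncells <= lab x i)%N).
Definition cell_value x i : A :=
  nth 0 (enum A) (if (ncells <= lab x i)%N then lab x i - ncells else lab x i)%N.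

Lemma ncells_gt0 : (0 < ncells)%N. Proof. by apply/card_gt0P; exists 0. Qed.

Lemma blen_gt0 : (0 < blen)%N. Proof. by rewrite /blen muln_gt0 ncells_gt0. Qed.

Lemma size_enumA : size (enum A) = ncells. Proof. by rewrite -cardE. Qed.

Lemma lab_block x p (j : nat) : is_block x p -> (j < blen)%N -> lab x (p + j%:Z) = j.
Proof. by move=> /forallP v hj; have /eqP := v (Ordinal hj). Qed.

Lemma cell_decode x s a : is_block x s.1 ->
  [/\ in_cell x (cell s a), cell_site x (cell s a) = s & cell_value x (cell s a) = a].
Proof.
case: s => p right /= v.
have ia : (index a (enum A) < ncells)%N by rewrite -size_enumA index_mem mem_enum.
have na : nth 0 (enum A) (index a (enum A)) = a by rewrite nth_index // mem_enum.
move: ia na; rewrite /cell /site_base /=; set k := index a (enum A) => ia na.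
have hl : lab x (p + (if right then ncells%:Z else 0) + k%:Z)
    = ((if right then ncells else 0) + k)%N.
  rewrite -addrA (_ : _ + k%:Z = ((if right then ncells else 0) + k)%N%:Z).
    by apply: lab_block => //; rewrite /blen; case: right; lia.
  by case: right.
set i := p + (if right then ncells%:Z else 0) + k%:Z in hl *.
have ep : i - (lab x i)%:Z = p.
  by rewrite hl /i; case: ifP; lia.
rewrite /in_cell /cell_site /cell_value ep hl; clear ep hl i; split => //.
- by congr pair; case: right => /=; [apply/idP | apply/negbTE]; lia.
- by rewrite (_ : (if _ then _ else _) = k) //; case: right; case: ifP => /=; lia.
Qed.

Lemma cell_encode x i : in_cell x i ->
  is_block x (cell_site x i).1 /\ cell (cell_site x i) (cell_value x i) = i.
Proof.
move=> inc; split => //.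
have : (lab x i < blen)%N by rewrite /lab /lab_of ltn_ord.
rewrite /cell /site_base /cell_value /=; set j := lab x i => hj.
rewrite index_uniq ?enum_uniq ?size_enumA //; first by case: ifP => /=; lia.
by rewrite /blen in hj; case: ifP; lia.
Qed.

Lemma reading_walk x s k : is_block x s.1 -> reading x (walk x k s) = shift k (reading x s).
Proof. by move=> v; apply: funext => i; rewrite /reading /shift -walkD. Qed.

Lemma site_base_shift k s : site_base (site_shift k s) = site_base s + k.
Proof. by rewrite /site_base /=; ring. Qed.

Lemma cell_shift k s a : cell (site_shift k s) a = cell s a + k.
Proof. by rewrite /cell site_base_shift; ring. Qed.

Lemma reading_shift x k s : reading (shift k x) s = reading x (site_shift k s).
Proof. by apply: funext => i; rewrite /reading -walk_shift site_base_shift. Qed.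

Lemma lamp_on_shift x k s : lamp_on (shift k x) s = lamp_on x (site_shift k s).
Proof. by rewrite /lamp_on site_base_shift. Qed.

Lemma in_cell_shift x k i : in_cell (shift k x) i = in_cell x (i + k).
Proof. by rewrite /in_cell is_block_shift /lab /shift addrAC. Qed.

Lemma cell_site_shift x k i :
  site_shift k (cell_site (shift k x) i) = cell_site x (i + k).
Proof. by rewrite /cell_site /site_shift /lab /shift /=; congr pair; ring. Qed.

Variables (G : set (endo Gam)) (c : endo Gam -> conf Gam -> int).

Definition site_act x (g : endo Gam) (s : site) : site := walk x (c g (reading x s)) s.

Definition lamp_sum x (f : endo Gam -> A) (t : site) : A :=
  \sum_(h \in G) (if lamp_on x (site_act x (finv h) t) then f h else 0).

Definition move_cell x (w : wreath_carrier A Gam) (i : int) : int :=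
  if in_cell x i then
    let s := site_act x w.2 (cell_site x i) in cell s (cell_value x i + lamp_sum x w.1 s)
  else i.

Definition disp (w : wreath_carrier A Gam) x : int := move_cell x w 0.

Lemma site_act_shift x k g s :
  site_shift k (site_act (shift k x) g s) = site_act x g (site_shift k s).
Proof. by rewrite /site_act walk_shift reading_shift. Qed.

Lemma lamp_sum_shift x k f s : lamp_sum (shift k x) f s = lamp_sum x f (site_shift k s).
Proof. by apply: eq_fsbigr => h _; rewrite lamp_on_shift site_act_shift. Qed.

Lemma move_cell_shift x k w i : move_cell (shift k x) w i + k = move_cell x w (i + k).
Proof.
rewrite /move_cell in_cell_shift; case: ifP => // _.
by rewrite -cell_shift site_act_shift cell_site_shift lamp_sum_shift site_act_shift
  cell_site_shift.
Qed.

Hypotheses (hG : subgroup_TFG G) (hc : cocycles_of G c) (hGam : alphabet Gam).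

Lemma site_act_block x g s : is_block x s.1 -> is_block x (site_act x g s).1.
Proof. exact: walk_block. Qed.

Lemma site_act_id x s : site_act x id s = s.
Proof. by rewrite /site_act (cocycle_id hG hc hGam). Qed.

Lemma site_act_comp x g h s : G g -> G h -> is_block x s.1 ->
  site_act x (g \o h) s = site_act x g (site_act x h s).
Proof.
move=> Gg Gh v; rewrite /site_act (cocycle_comp hG hc hGam _ Gg Gh) reading_walk //.
by rewrite walkD //; have [_ ->] := hc Gh.
Qed.

Lemma lamp_sum_act x g f t : G g -> is_block x t.1 ->
  lamp_sum x (fun h => f (finv g \o h)) (site_act x g t) = lamp_sum x f t.
Proof.
move=> Gg vt; rewrite /lamp_sum (reindex_fsbig _ G G _ (G_left_bij hG Gg)).
apply: eq_fsbigr => h /set_mem Gh.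
have ginvK : finv g \o (g \o h) = h by apply: funext => u /=; rewrite (finvK hG Gg).
rewrite (finv_comp hG Gg Gh) ginvK.
rewrite (site_act_comp (G_finv hG Gh) (G_finv hG Gg)) ?site_act_block //.
rewrite -(site_act_comp (G_finv hG Gg) Gg vt) (_ : finv g \o g = id) ?site_act_id //.
by apply: funext => u /=; rewrite (finvK hG Gg).
Qed.

Lemma lamp_sumD x (f1 f2 : endo Gam -> A) t :
  finite_set (supp f1) -> finite_set (supp f2) ->
  lamp_sum x (fun h => f1 h + f2 h) t = lamp_sum x f1 t + lamp_sum x f2 t.
Proof.
move=> fin1 fin2; rewrite /lamp_sum -(fsumD _ (S := supp f1 `|` supp f2)).
- by apply: eq_fsbigr => h _; case: ifP; rewrite ?addr0.
- by rewrite finite_setU.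
- move=> h nS; rewrite /supp /= in nS.
  by split; case: ifP => // _; apply/eqP; apply: contrapT => /negP ?; apply: nS; [left | right].
Qed.

Lemma translate_finite g (f : endo Gam -> A) : G g -> finite_set (supp f) ->
  finite_set (supp (fun h : endo Gam => f (finv g \o h))).
Proof.
move=> Gg fin; apply: (sub_finite_set _ (finite_image (fun h : endo Gam => g \o h) fin)).
by move=> h hs; exists (finv g \o h) => //; apply: funext => u /=; rewrite (finvKV hG Gg).
Qed.

(* Moving cells realises the wreath product law, hence the displacement at 0
   satisfies the cocycle identity. *)
Lemma move_cell_comp x w1 w2 i : in_wreath G w1 -> in_wreath G w2 ->
  move_cell x (wmul w1 w2) i = move_cell x w1 (move_cell x w2 i).
Proof.
case: w1 => f1 g1; case: w2 => f2 g2 [/= Gg1 [_ fin1]] [/= Gg2 [_ fin2]].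
rewrite /move_cell /=; case: ifP => inc; last by rewrite inc.
have [vs _] := cell_encode inc.
set s := cell_site x i; set t2 := site_act x g2 s.
have vt2 : is_block x t2.1 by apply: site_act_block.
have [inc2 -> ->] := cell_decode (cell_value x i + lamp_sum x f2 t2) vt2.
rewrite inc2 (site_act_comp Gg1 Gg2 vs) -/t2 lamp_sumD //; last exact: translate_finite Gg1 fin2.
by rewrite lamp_sum_act // [lamp_sum x f1 _ + _]addrC addrA.
Qed.

Lemma disp_comp x w1 w2 : in_wreath G w1 -> in_wreath G w2 ->
  disp (wmul w1 w2) x = disp w2 x + disp w1 (shift (disp w2 x) x).
Proof.
move=> h1 h2; rewrite /disp move_cell_comp //.
by have := move_cell_shift x (disp w2 x) w1 0; rewrite add0r /disp => <-; ring.
Qed.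

Lemma disp_id x : disp ((fun _ => 0), id) x = 0.
Proof.
rewrite /disp /move_cell /=; case: ifP => // inc.
rewrite site_act_id (_ : lamp_sum _ _ _ = 0) ?addr0; first exact: (cell_encode inc).2.
by apply: fsbig1 => h _; rewrite if_same.
Qed.

End Model.

(* Continuity of the displacement *)

Lemma common_bound (T : eqType) (Q : T -> nat -> Prop) (l : seq T) :
  (forall h R R', (R <= R')%N -> Q h R -> Q h R') ->
  (forall h, h \in l -> exists R, Q h R) -> exists R, forall h, h \in l -> Q h R.
Proof.
move=> mono; elim: l => [|h l ih] hl; first by exists 0%N.
have [R1 q1] := hl h (mem_head _ _).
have [R2 q2] : exists R, forall h, h \in l -> Q h R.
  by apply: ih => h' h'l; apply: hl; rewrite inE h'l orbT.
exists (maxn R1 R2) => h'; rewrite inE => /orP [/eqP ->|h'l].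
- by apply: (mono _ R1) => //; apply: leq_maxl.
- by apply: (mono _ R2) => //; [apply: leq_maxr | apply: q2].
Qed.

Section Continuity.
Variables (A : finZmodType) (Gam : finType) (G : set (endo Gam))
  (c : endo Gam -> conf Gam -> int)
  (hG : subgroup_TFG G) (hc : cocycles_of G c).
Implicit Types x y : conf (Lambda A Gam).

Local Notation blen := (blen A).
Local Notation walk := (walk blen (@lab_of A Gam)).

Lemma reading_local x y R M s : agree R x y ->
  (`|s.1| + blen * M + 3 * blen <= R)%N -> agree M (reading x s) (reading y s).
Proof.
move=> ag hR i hi; rewrite /reading.
have hm : (blen * `|i| <= blen * M)%N by rewrite leq_mul2l hi orbT.
rewrite -(walk_local _ (R := R) (k := i) (s := s) ag); last lia.
congr (_.2.1); apply: ag; have := walk_dist blen (@lab_of A Gam) x i s.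
rewrite /site_base; case: (walk _ _ _) => p right /= hb.
have : (ncells A <= blen)%N by rewrite /blen /ncells; lia.
by case: right; lia.
Qed.

Lemma site_act_local x g s : G g ->
  exists R, forall y, agree R x y -> site_act c y g s = site_act c x g s.
Proof.
move=> Gg; have [cg _] := hc Gg; have [M hM] := cg (reading x s).
set k := c g (reading x s).
have blen_pos := blen_gt0 A.
exists (`|s.1| + blen * maxn M `|k| + 3 * blen)%N => y ag.
have blenM : (blen * M <= blen * maxn M `|k|)%N by rewrite leq_mul2l leq_maxl orbT.
have blenk : (blen * `|k| <= blen * maxn M `|k|)%N by rewrite leq_mul2l leq_maxr orbT.
rewrite /site_act -/k (_ : c g (reading y s) = k); last by apply/hM/(reading_local ag); lia.
by symmetry; apply: (walk_local _ ag); lia.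
Qed.

Lemma lamp_sum_local x (f : endo Gam -> A) t : supp f `<=` G -> finite_set (supp f) ->
  exists R, forall y, agree R x y -> lamp_sum G c y f t = lamp_sum G c x f t.
Proof.
move=> sG fin.
have [R hR] : exists R, forall h : endo Gam, h \in fset_set (supp f) ->
    forall y, agree R x y ->
    lamp_on y (site_act c y (finv h) t) = lamp_on x (site_act c x (finv h) t).
  apply: common_bound => [h R1 R2 le q y ag|h].
    by apply: q; apply: agree_le ag.
  rewrite in_fset_set // => /set_mem /sG Gh.
  have [R1 h1] := site_act_local x t (G_finv hG Gh).
  exists (maxn R1 `|site_base A (site_act c x (finv h) t)|) => y ag.
  rewrite h1; last by apply: agree_le ag; apply: leq_maxl.
  by rewrite /lamp_on ag // leq_maxr.
exists R => y ag; apply: eq_fsbigr => h _.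
case: (eqVneq (f h) 0) => [->|nz]; first by rewrite !if_same.
by rewrite hR // in_fset_set //; apply: mem_set.
Qed.

Lemma cell_at0_local x y : agree (3 * blen) x y ->
  [/\ in_cell y 0 = in_cell x 0, cell_site y 0 = cell_site x 0
    & cell_value y 0 = cell_value x 0].
Proof.
move=> ag; have el : lab y 0 = lab x 0 by rewrite /lab ag.
rewrite /in_cell /cell_site /cell_value el; split => //.
symmetry; apply: (is_block_local _ ag); have : (lab x 0 < blen)%N by exact: ltn_ord.
lia.
Qed.

Lemma disp_continuous (w : wreath_carrier A Gam) : in_wreath G w -> int_continuous (disp G c w).
Proof.
case: w => f g [/= Gg [sG fin]] x; rewrite /disp /move_cell /=.
have [R1 h1] := site_act_local x (cell_site x 0) Gg.
have [R2 h2] := lamp_sum_local x (site_act c x g (cell_site x 0)) sG fin.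
exists (maxn (maxn R1 R2) (3 * blen)) => y ag.
have [-> -> ->] := cell_at0_local (agree_le (leq_maxr _ _) ag).
case: ifP => // _; rewrite h1; last by apply: agree_le ag; lia.
by rewrite h2 //; apply: agree_le ag; lia.
Qed.

End Continuity.

(* Configurations made of a single bi-infinite chain of blocks *)

Section Chain.
Variables (A : finZmodType) (Gam : finType) (G : set (endo Gam))
  (c : endo Gam -> conf Gam -> int).

Local Notation blen := (blen A).
Local Notation b := (blen%:Z).
Local Notation is_block := (is_block blen (@lab_of A Gam)).
Local Notation walk := (walk blen (@lab_of A Gam)).

Lemma blenZ_neq0 : b != 0. Proof. by have := blen_gt0 A; lia. Qed.

Lemma mod_blen_lt (i : int) : (absz (i %% b)%Z < blen)%N.
Proof. by have := modz_ge0 i blenZ_neq0; have := ltz_mod i blenZ_neq0; lia. Qed.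

Definition chain (u : conf Gam) (v : conf bool) : conf (Lambda A Gam) :=
  fun i => (Ordinal (mod_blen_lt i), (u (i %/ b)%Z, v (i %/ b)%Z)).

Lemma divmod_blen (m : int) (j : nat) : (j < blen)%N ->
  ((m * b + j%:Z) %/ b)%Z = m /\ ((m * b + j%:Z) %% b)%Z = j%:Z.
Proof.
move=> hj; split.
- by rewrite divzMDl ?blenZ_neq0 // divz_small ?addr0 //; apply/andP; split; lia.
- by rewrite modzMDl modz_small //; apply/andP; split; lia.
Qed.

Lemma divz_blen (m : int) : ((m * b) %/ b)%Z = m.
Proof. by have [] := divmod_blen m (blen_gt0 A); rewrite addr0. Qed.

Lemma chain_at u v (m : int) (j : nat) : (j < blen)%N ->
  [/\ lab (chain u v) (m * b + j%:Z) = j, (chain u v (m * b + j%:Z)).2.1 = u m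
    & (chain u v (m * b + j%:Z)).2.2 = v m].
Proof. by move=> hj; have [e1 e2] := divmod_blen m hj; rewrite /lab /lab_of /chain /= e1 e2. Qed.

Lemma chain_at_start u v (m : int) :
  [/\ lab (chain u v) (m * b) = 0%N, (chain u v (m * b)).2.1 = u m
    & (chain u v (m * b)).2.2 = v m].
Proof. by have := chain_at u v m (blen_gt0 A); rewrite addr0. Qed.

Lemma chain_block u v (m : int) : is_block (chain u v) (m * b).
Proof. by apply/forallP => j; have [/eqP] := chain_at u v m (ltn_ord j). Qed.

Lemma walk_chain u v (m k : int) : walk (chain u v) k (m * b, false) = ((m + k) * b, false).
Proof.
have vm := chain_block u v m.
elim/int_rec: k => [|k ih|k ih]; first by rewrite addr0.
- rewrite -addn1 PoszD walkS // ih /= (_ : _ + b = (m + (k%:Z + 1)) * b) ?chain_block //.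
  by ring.
- rewrite -addn1 PoszD opprD walkB // ih /=.
  by rewrite (_ : _ - b = (m + (- k%:Z - 1)) * b) ?chain_block //; ring.
Qed.

Lemma reading_chain u v (m : int) : reading (chain u v) (m * b, false) = shift m u.
Proof.
apply: funext => i; rewrite /reading walk_chain /site_base /= addr0.
by rewrite divz_blen /shift addrC.
Qed.

Lemma site_act_chain u v g (m : int) :
  site_act c (chain u v) g (m * b, false) = ((m + c g (shift m u)) * b, false).
Proof. by rewrite /site_act reading_chain walk_chain. Qed.

Lemma lamp_sum_chain u v f (m : int) : lamp_sum G c (chain u v) f (m * b, false) =
  \sum_(h \in G) (if v (m + c (finv h) (shift m u)) then f h else 0).
Proof.
by apply: eq_fsbigr => h _; rewrite site_act_chain /lamp_on /site_base /= addr0 divz_blen.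
Qed.

Definition indicator (k : int) : conf bool := fun m => m == k.

Lemma lamp_sum_chain_level u f (m k : int) :
  lamp_sum G c (chain u (indicator (m + k))) f (m * b, false) =
  \sum_(h \in G) (if c (finv h) (shift m u) == k then f h else 0).
Proof.
by rewrite lamp_sum_chain; apply: eq_fsbigr => h _; rewrite /indicator (inj_eq (addrI m)).
Qed.

(* 0 is the first cell of the left site of block 0, so the displacement of
   (f, g) is read off the block c_g(u) and the value index. *)
Lemma disp_chain u v f g : disp G c (f, g) (chain u v) =
  c g u * b + (index (nth 0 (enum A) 0 + lamp_sum G c (chain u v) f (c g u * b, false))
    (enum A))%:Z.
Proof.
have [l0 _ _] := chain_at_start u v 0; rewrite mul0r in l0.
have left0 : (ncells A <= 0)%N = false by have := ncells_gt0 A; lia.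
have site0 : cell_site (chain u v) 0 = (0 * b, false).
  by rewrite /cell_site l0 mul0r subr0 left0.
have inc0 : in_cell (chain u v) 0 by rewrite /in_cell l0 subr0 -(mul0r b) chain_block.
rewrite /disp /move_cell inc0 site0 site_act_chain shift0 add0r /cell_value l0 /=.
by rewrite left0 /cell /site_base /= addr0.
Qed.

Lemma chain_aperiodic u k : aperiodic (chain u (indicator k)).
Proof.
move=> t e; have := congr1 (fun y => y (k * b)) e; rewrite /shift => e1.
set i := k * b + t in e1.
have [lab_k _ _] := chain_at_start u (indicator k) k.
have /eqP div_i : (i %/ b)%Z == k.
  by have := congr1 (fun a => a.2.2) e1; rewrite /= divz_blen /indicator eqxx.
have mod_i : (i %% b)%Z = 0.
  have : lab (chain u (indicator k)) i = 0%N by rewrite /lab e1 -/(lab _ _) lab_k.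
  by rewrite /lab /lab_of /=; have := modz_ge0 i blenZ_neq0; lia.
by have := divz_eq i b; rewrite div_i mod_i addr0 /i; lia.
Qed.

End Chain.

(* Recovering a wreath element from its displacements *)

Lemma sum_by_levels (T : eqType) (V W : zmodType) (l : seq T) (lev : T -> int)
  (D : T -> V) (gam : int -> {additive V -> W}) :
  (forall k, \sum_(h <- l) (if lev h == k then D h else 0) = 0) ->
  \sum_(h <- l) gam (lev h) (D h) = 0.
Proof.
move=> levels; pose K := undup (map lev l).
rewrite (eq_big_seq (fun h => \sum_(k <- K) if k == lev h then gam k (D h) else 0));
  last first.
  move=> h lh; rewrite -big_mkcond -big_filter filter_pred1_uniq ?undup_uniq ?big_seq1 //.
  by rewrite mem_undup map_f.
rewrite exchange_big big1 // => k _.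
rewrite (eq_bigr (fun h => gam k (if lev h == k then D h else 0))); last first.
  by move=> h _; rewrite eq_sym; case: ifP => // _; rewrite raddf0.
by rewrite -raddf_sum levels raddf0.
Qed.

Lemma fsum_supp_seq (T : choiceType) (A V : zmodType) (G : set T) (D : T -> A)
  (phi : T -> V) : supp D `<=` G -> finite_set (supp D) ->
  (forall h, D h = 0 -> phi h = 0) ->
  \sum_(h \in G) phi h = \sum_(h <- fset_set (supp D)) phi h.
Proof.
move=> sG fin z; rewrite (fsum_restrict (S := supp D)); last first.
  by move=> h _ nS; apply: z; apply/eqP; apply: contrapT => /negP ne; apply: nS.
rewrite (_ : G `&` supp D = supp D) ?fsbig_finite //.
by apply/seteqP; split => h; [case | move=> sh; split => //; apply: sG].
Qed.

Section Faithful.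
Variables (A : finZmodType) (Gam : finType) (G : set (endo Gam))
  (c : endo Gam -> conf Gam -> int) (hG : subgroup_TFG G)
  (hmove : move_faithful A G c).

(* Move-A-ithfulness, stated for D = beta o inverse. *)
Lemma move_faithful_inv (D : endo Gam -> A) h0 :
  supp D `<=` G -> finite_set (supp D) -> D h0 != 0 ->
  exists (x : conf Gam) (gam : int -> {additive A -> A}),
    \sum_(h \in G) gam (c (finv h) x) (D h) != 0.
Proof.
move=> sD finD nz; have Gh0 : G h0 by apply: sD.
pose beta t := if `[< G t >] then D (finv t) else 0.
have beta_supp : supp beta `<=` G.
  by move=> t; rewrite /supp /= /beta; case: asboolP => // _; rewrite eqxx.
have beta_finite : finite_set (supp beta).
  apply: (sub_finite_set _ (finite_image (fun t : endo Gam => finv t) finD)) => t bt.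
  have Gt := beta_supp t bt; move: bt; rewrite /supp /= /beta asboolT // => bt.
  by exists (finv t) => //; rewrite (finv_finv hG Gt).
have beta_nonempty : supp beta != set0.
  apply/set0P; exists (finv h0).
  by rewrite /supp /= /beta asboolT ?(finv_finv hG Gh0) //; apply: G_finv.
have [x [gam sum_nz]] := hmove beta_supp beta_finite beta_nonempty.
exists x, gam; rewrite (reindex_fsbig _ G G _ (G_finv_bij hG)) in sum_nz.
rewrite (eq_fsbigr (fun h : endo Gam => gam (c (finv h) x) (beta (finv h)))) //.
by move=> h /set_mem Gh; rewrite /beta asboolT ?(finv_finv hG Gh) //; apply: G_finv.
Qed.

Lemma level_sums_zero (D : endo Gam -> A) :
  supp D `<=` G -> finite_set (supp D) ->
  (forall u k, \sum_(h \in G) (if c (finv h) u == k then D h else 0) = 0) ->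
  forall h, D h = 0.
Proof.
move=> sD finD levels h; apply/eqP; apply: contrapT => /negP nz.
have [x [gam /eqP]] := move_faithful_inv sD finD nz; apply.
rewrite (fsum_supp_seq sD finD) => [|t ->]; last by rewrite raddf0.
apply: sum_by_levels => k; rewrite -(fsum_supp_seq sD finD) ?levels //.
by move=> t ->; rewrite if_same.
Qed.

End Faithful.

Lemma supp_subr (T : Type) (V : zmodType) (f1 f2 : T -> V) :
  supp (fun h => f1 h - f2 h) `<=` supp f1 `|` supp f2.
Proof.
move=> h; rewrite /supp /= => nz; apply: contrapT => /not_orP[].
by move=> /negP/negPn/eqP e1 /negP/negPn/eqP e2; move: nz; rewrite e1 e2 subrr eqxx.
Qed.

Section Injectivity.
Variables (A : finZmodType) (Gam : finType) (G : set (endo Gam))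
  (c : endo Gam -> conf Gam -> int) (hG : subgroup_TFG G) (hc : cocycles_of G c)
  (hmove : move_faithful A G c).

Local Notation b := ((blen A)%:Z).

Lemma block_coords_inj (a a' : int) (i i' : nat) : (i < blen A)%N -> (i' < blen A)%N ->
  a * b + i%:Z = a' * b + i'%:Z -> a = a' /\ i = i'.
Proof.
move=> hi hi' e; have [d m] := divmod_blen a hi; have [d' m'] := divmod_blen a' hi'.
by split; [rewrite -d e d' | apply/eqP; rewrite -eqz_nat -m e m'].
Qed.

Lemma index_lt_blen (a : A) : (index a (enum A) < blen A)%N.
Proof.
have : (index a (enum A) < size (enum A))%N by rewrite index_mem mem_enum.
by rewrite size_enumA /blen; lia.
Qed.

Lemma disp_chain_eq (f1 f2 : endo Gam -> A) (g1 g2 : endo Gam) u k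
  (x := chain A u (indicator k)) :
  shift (disp G c (f1, g1) x) x = shift (disp G c (f2, g2) x) x ->
  c g1 u = c g2 u /\
  lamp_sum G c x f1 (c g1 u * b, false) = lamp_sum G c x f2 (c g1 u * b, false).
Proof.
move/(aperiodic_shift_inj (@chain_aperiodic A Gam u k)); rewrite !disp_chain.
case/block_coords_inj; rewrite ?index_lt_blen // => ec.
by move/(congr1 (nth 0 (enum A))); rewrite !nth_index ?mem_enum // => /addrI ->; rewrite ec.
Qed.

(* The displacements determine the wreath element: g from the cocycles, then
   f from the vanishing of all level sums of the difference (move-A-ithfulness). *)
Lemma disp_injective (w1 w2 : wreath_carrier A Gam) : in_wreath G w1 -> in_wreath G w2 ->
  (forall x, shift (disp G c w1 x) x = shift (disp G c w2 x) x) -> w1 = w2.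
Proof.
case: w1 => f1 g1; case: w2 => f2 g2 [/= Gg1 [s1 fin1]] [/= Gg2 [s2 fin2]] same.
have E u k := disp_chain_eq (same (chain A u (indicator k))).
have eg : g1 = g2.
  apply: funext => u; have [_ ->] := hc Gg1; have [_ ->] := hc Gg2.
  by rewrite (E u 0).1.
subst g2; congr pair; pose D h := f1 h - f2 h.
have finD : finite_set (supp D).
  by apply: sub_finite_set (@supp_subr _ _ f1 f2) _; rewrite finite_setU.
suff D0 : forall h, D h = 0 by apply: funext => h; apply/eqP; rewrite -subr_eq0 -/(D h) D0.
have sD : supp D `<=` G by move=> h /(@supp_subr _ _ f1 f2) [/s1|/s2].
apply: (level_sums_zero hG hmove sD finD) => u0 k.
pose u := finv g1 u0; pose m := c g1 u.
have hu : shift m u = u0 by have [_ <-] := hc Gg1; rewrite /u (finvKV hG Gg1).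
have [_ eF] := E u (m + k); rewrite -hu -lamp_sum_chain_level.
have f1E : f1 = (fun h => f2 h + D h) by apply: funext => h; rewrite /D addrC subrK.
by move: eF; rewrite {1}f1E lamp_sumD // -[RHS]addr0 => /addrI.
Qed.

End Injectivity.

(* Recoding into Sigma^Z *)

Lemma shift_by_continuous (S : Type) (d : conf S -> int) : int_continuous d ->
  conf_continuous (fun y => shift (d y) y).
Proof.
move=> hd x M; have [N hN] := hd x.
exists (maxn N (M + `|d x|)) => y ag i hi.
have -> : d y = d x by apply: hN; apply: agree_le ag; lia.
by rewrite /shift; apply: ag; lia.
Qed.

(* Letters of L are coded by words of length |L|+1 over Sigma, of which there
   are more than |L|; a point of Sigma^Z is decoded block by block. *)
Section Recoding.
Variables (L Sig : finType) (l0 : L) (hSig : alphabet Sig).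

Definition width : nat := #|L|.+1.
Definition word := {ffun 'I_width -> Sig}.

Lemma enough_words : (#|L| <= #|{: word}|)%N.
Proof.
rewrite card_ffun card_ord.
have two_le : (2 <= #|Sig|)%N by exact: hSig.
rewrite -(leq_exp2r _ _ (ltn0Sn #|L|)) in two_le.
by have := ltn_expl width (isT : (1 < 2)%N); rewrite /width in two_le *; lia.
Qed.

Definition encode (l : L) : word := enum_val (widen_ord enough_words (enum_rank l)).

Lemma encode_inj : injective encode.
Proof. by move=> a a' /enum_val_inj /(congr1 val) /= /val_inj; apply: enum_rank_inj. Qed.

Definition decode (wd : word) : L := if [pick l | encode l == wd] is Some l then l else l0.

Lemma encodeK : cancel encode decode.
Proof.
by move=> l; rewrite /decode; case: pickP => [l' /eqP /encode_inj //|/(_ l)]; rewrite eqxx.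
Qed.

Definition block_decode (y : conf Sig) : conf L :=
  fun i => decode [ffun j : 'I_width => y (i * width%:Z + (nat_of_ord j)%:Z)].

Definition block_encode (x : conf L) : conf Sig :=
  fun i => encode (x (i %/ width%:Z)%Z) (inord (absz (i %% width%:Z)%Z)).

Lemma block_decode_shift y k : block_decode (shift (k * width%:Z) y) = shift k (block_decode y).
Proof.
apply: funext => i; rewrite /block_decode /shift; congr decode; apply/ffunP => j.
by rewrite !ffunE; congr y; ring.
Qed.

Lemma block_encodeK x : block_decode (block_encode x) = x.
Proof.
apply: funext => i; rewrite /block_decode /block_encode -[RHS]encodeK.
congr decode; apply/ffunP => j; rewrite ffunE.
have hj := ltn_ord j; have w0 : width%:Z != 0 by [].
rewrite divzMDl // divz_small ?addr0 ?modzMDl ?modz_small /= ?inord_val //;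
  apply/andP; split; rewrite /width; lia.
Qed.

Lemma block_decode_continuous (N : nat) y y' :
  agree (N.+1 * width) y y' -> agree N (block_decode y) (block_decode y').
Proof.
move=> ag i hi; rewrite /block_decode; congr decode; apply/ffunP => j; rewrite !ffunE.
apply: ag; have hj := ltn_ord j.
have : (`|i| * width <= N * width)%N by rewrite leq_mul2r hi orbT.
lia.
Qed.

(* A family of continuous cocycles on L^Z satisfying the cocycle identity and
   separating points of a group W embeds W into [[Sigma^Z]], by shifting
   points of Sigma^Z according to their decoding. *)
Variables (W : Type) (inW : W -> Prop) (mul : W -> W -> W) (one : W) (inv : W -> W)
  (d : W -> conf L -> int).
Hypotheses (d_continuous : forall w, inW w -> int_continuous (d w))
  (d_comp : forall w1 w2, inW w1 -> inW w2 -> forall x,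
     d (mul w1 w2) x = d w2 x + d w1 (shift (d w2 x) x))
  (d_one : forall x, d one x = 0)
  (inv_spec : forall w, inW w -> inW (inv w) /\ mul w (inv w) = one /\ mul (inv w) w = one)
  (d_separates : forall w1 w2, inW w1 -> inW w2 ->
     (forall x, shift (d w1 x) x = shift (d w2 x) x) -> w1 = w2).

Definition lifted_disp (w : W) (y : conf Sig) : int := d w (block_decode y) * width%:Z.
Definition lift (w : W) (y : conf Sig) : conf Sig := shift (lifted_disp w y) y.

Lemma lifted_disp_continuous w : inW w -> int_continuous (lifted_disp w).
Proof.
move=> iw y; have [N hN] := d_continuous iw (block_decode y).
exists (N.+1 * width)%N => y' ag; rewrite /lifted_disp hN //.
exact: block_decode_continuous.
Qed.

Lemma lift_comp w1 w2 : inW w1 -> inW w2 -> lift (mul w1 w2) = lift w1 \o lift w2.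
Proof.
move=> i1 i2; apply: funext => y /=.
by rewrite /lift /lifted_disp block_decode_shift shift_shift d_comp // mulrDl.
Qed.

Lemma lift_one : lift one = id.
Proof. by apply: funext => y; rewrite /lift /lifted_disp d_one mul0r shift0. Qed.

Lemma lift_TFG w : inW w -> TFG (lift w).
Proof.
move=> iw; have [iwinv [mul_inv inv_mul]] := inv_spec iw.
have cancel_lift w1 w2 : inW w1 -> inW w2 -> mul w1 w2 = one -> cancel (lift w2) (lift w1).
  by move=> i1 i2 e y; rewrite -[lift w1 _]/((lift w1 \o lift w2) y) -lift_comp // e lift_one.
split; last by exists (lifted_disp w); split => //; apply: lifted_disp_continuous.
split; first exact/shift_by_continuous/lifted_disp_continuous.
exists (lift (inv w)); split; [exact: cancel_lift | split; first exact: cancel_lift].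
exact/shift_by_continuous/lifted_disp_continuous.
Qed.

Lemma lift_inj w1 w2 : inW w1 -> inW w2 -> lift w1 = lift w2 -> w1 = w2.
Proof.
move=> i1 i2 e; apply: d_separates => // x.
have := congr1 (fun f => block_decode (f (block_encode x))) e.
by rewrite /lift /lifted_disp block_encodeK !block_decode_shift block_encodeK.
Qed.

Lemma cocycle_embedding : exists Phi : W -> conf Sig -> conf Sig,
  [/\ forall w, inW w -> TFG (Phi w),
    forall w1 w2, inW w1 -> inW w2 -> Phi (mul w1 w2) = Phi w1 \o Phi w2
  & forall w1 w2, inW w1 -> inW w2 -> Phi w1 = Phi w2 -> w1 = w2].
Proof. by exists lift; split; [exact: lift_TFG | exact: lift_comp | exact: lift_inj]. Qed.

End Recoding.

(* The group structure of A wr G and the main theorem *)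

Section Wreath.
Variables (A : finZmodType) (Gam : finType) (G : set (endo Gam)) (hG : subgroup_TFG G).

Definition wreath_one : wreath_carrier A Gam := ((fun _ => 0), id).

Definition wreath_inv (w : wreath_carrier A Gam) : wreath_carrier A Gam :=
  ((fun h => - w.1 (w.2 \o h)), finv w.2).

Lemma wreath_inv_in w : in_wreath G w -> in_wreath G (wreath_inv w).
Proof.
case: w => f g [/= Gg [sG fin]].
have supp_inv : supp (fun h : endo Gam => - f (g \o h)) `<=` (fun h => finv g \o h) @` supp f.
  move=> h; rewrite /supp /= oppr_eq0 => nz; exists (g \o h) => //.
  by apply: funext => u /=; rewrite (finvK hG Gg).
split => /=; first exact: G_finv.
split; last exact: sub_finite_set supp_inv (finite_image _ fin).
by move=> h /supp_inv [h' /sG Gh' <-]; apply: G_comp => //; apply: G_finv.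
Qed.

Lemma wreath_inv_spec w : in_wreath G w ->
  wmul w (wreath_inv w) = wreath_one /\ wmul (wreath_inv w) w = wreath_one.
Proof.
case: w => f g [/= Gg _]; rewrite /wmul /wreath_one /= (finv_finv hG Gg).
have gK : g \o finv g = id by apply: funext => u /=; rewrite (finvKV hG Gg).
have Kg : finv g \o g = id by apply: funext => u /=; rewrite (finvK hG Gg).
split; congr pair => //; apply: funext => h; last by rewrite addrC subrr.
by rewrite compA gK subrr.
Qed.

End Wreath.

(* The displacements disp G c on Lambda^Z fulfil the hypotheses of
   cocycle_embedding. *)
Theorem mainTheorem12 (A : finZmodType) (hA : (1 < #|A|)%N)
  (Gam : finType) (hGam : alphabet Gam)
  (G : set (endo Gam)) (hG : subgroup_TFG G)
  (c : endo Gam -> conf Gam -> int) (hc : cocycles_of G c)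
  (hmove : move_faithful A G c)
  (Sig : finType) (hSig : alphabet Sig) :
  exists Phi : wreath_carrier A Gam -> (conf Sig -> conf Sig),
    (forall w, in_wreath G w -> @TFG Sig (Phi w)) /\
    (forall w1 w2, in_wreath G w1 -> in_wreath G w2 ->
       Phi (wmul w1 w2) = Phi w1 \o Phi w2) /\
    (forall w1 w2, in_wreath G w1 -> in_wreath G w2 ->
       Phi w1 = Phi w2 -> w1 = w2).
Proof.
have [a _] := alphabet_two_letters hGam.
pose l0 : Lambda A Gam := (Ordinal (blen_gt0 A), (a, false)).
have [Phi [hom comp inj]] := cocycle_embedding l0 hSig (inW := in_wreath G)
  (mul := @wmul A Gam) (one := wreath_one A Gam) (inv := @wreath_inv A Gam)
  (d := disp G c) (disp_continuous hG hc)
  (fun w1 w2 i1 i2 x => disp_comp hG hc hGam x i1 i2) (disp_id hG hc hGam)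
  (fun w iw => conj (wreath_inv_in hG iw) (wreath_inv_spec hG iw))
  (fun w1 w2 => @disp_injective _ _ _ _ hG hc hmove w1 w2).
by exists Phi; split; [|split].
Qed.
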